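(* Let $t$ be a positive integer, $\mathbf v$ a good vector with respect to $t$, and $n=4t+1$ if $|\mathbf v|=2t$, $n=4t+2$ if $|\mathbf v|=2t+1$. Let $k$ be a positive integer such that $2k\le 2t+\Delta+\lceil k/\Delta\rceil$ for every $\Delta\in[k]$. Then the code $\mathcal C$ of Construction C built from $\mathbf v$ is an $(n,(t+1)n,k,n)$-BAC over $\mathbb{F}_q$.
   Context: Fix a finite field $\mathbb{F}_q$. Good vector: for a positive integer $t$, $\mathbf v=(v_1,\dots,v_{2t})\in[t]^{2t}$ or $\mathbf v\in\{0,\dots,t\}^{2t+1}$ is good w.r.t. $t$ if every $j\in[t]$ appears exactly twice in $\mathbf v$ and whenever $v_i=v_{i'}=j\in[t]$ with $i<i'$ then $i'-i=j$; for $j\in[t]$ let $j(\mathbf v)=\max\{i:v_i=j\}$. Construction C: indices modulo $n$ with representatives in $[n]$; for $\mathbf x\in\mathbb{F}_q^n$, $i\in[n]$, $j\in[t]$ put $y_{i,j}=x_{i-t-j(\mathbf v)}+x_{i-t-j(\mathbf v)+j}$ and $\mathcal C(\mathbf x)=(\mathbf c_1,\dots,\mathbf c_n)$ with $\mathbf c_i=(x_i,y_{i,1},\dots,y_{i,t})$. An $(n,N,k,m)$-batch array code (BAC) over $\mathbb{F}_q$ is an $\mathbb{F}_q$-linear map $\mathbf x\mapsto(\mathbf c_1,\dots,\mathbf c_m)$ with buckets $\mathbf c_\ell\in\mathbb{F}_q^{N_\ell}$, $N_\ell\ge1$ independent of $\mathbf x$, $\sum_\ell N_\ell=N$, such that for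 every multiset $\{\{i_1,\dots,i_k\}\}$ of elements of $[n]$ there is a partition of $[m]$ into $k$ sets $R_1,\dots,R_k$ such that for each $j\in[k]$, $x_{i_j}$ is an $\mathbb{F}_q$-linear combination of values $f_\ell(\mathbf c_\ell)$, $\ell\in R_j$, for some linear functionals $f_\ell$ (independent of $\mathbf x$). *)

From HB Require Import structures.
From mathcomp Require Import all_boot all_order all_algebra all_field.
Set Implicit Arguments. Unset Strict Implicit. Unset Printing Implicit Defensive.
Import Order.TTheory GRing.Theory Num.Theory.
Local Open Scope ring_scope.

(* Good vector w.r.t. t.  v is a sequence (v_1,...,v_L), stored 0-based:
   v_i = nth 0 v (i-1). *)
Definition good_vector (t : nat) (v : seq nat) : Prop :=
  ((size v = 2 * t)%N /\ all (fun a => (1 <= a <= t)%N) v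
   \/ (size v = (2 * t).+1)%N /\ all (fun a => (a <= t)%N) v) /\
  (forall j : nat, (1 <= j <= t)%N -> count_mem j v = 2%N) /\
  (forall (j i i' : nat), (1 <= j <= t)%N -> (i < i' < size v)%N ->
     nth 0%N v i = j -> nth 0%N v i' = j -> (i' - i)%N = j).

(* j(v) = max{ i : v_i = j }, with 1-based positions i. *)
Definition jpos (v : seq nat) (j : nat) : nat :=
  \max_(i < size v | nth 0%N v i == j) i.+1.

Definition nC (t : nat) (v : seq nat) : nat :=
  if size v == (2 * t)%N then (4 * t).+1 else (4 * t).+2.

(* Coordinates are stored
   0-based: x_{a} (1-based, reduced into [n]) corresponds to entry
   ((a - 1) mod n) of the row vector; callers pass the 0-based integer. *)
Definition xat (F : fieldType) (n : nat) (x : 'rV[F]_n) (a : int) : F :=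
  nth 0 [seq x 0 i | i <- enum 'I_n] `|(a %% n%:Z)%Z|%N.

(* Construction C.  Bucket i (0-based, i.e. the paper's i+1) is
   c = (x_i, y_{i,1}, ..., y_{i,t}) with
   y_{i,j} = x_{i-t-j(v)} + x_{i-t-j(v)+j}  (indices mod n). *)
Definition yC (F : fieldType) (t : nat) (v : seq nat) (x : 'rV[F]_(nC t v))
    (i : nat) (j : nat) : F :=
  xat x (i%:Z - t%:Z - (jpos v j)%:Z) + xat x (i%:Z - t%:Z - (jpos v j)%:Z + j%:Z).

Definition constructionC (F : fieldType) (t : nat) (v : seq nat)
    (x : 'rV[F]_(nC t v)) (l : 'I_(nC t v)) : 'rV[F]_t.+1 :=
  \row_(s < t.+1) (if s == ord0 then x 0 l else yC x l s).

(* (n, N, k, m)-batch array code over F: an F-linear map x |-> (c_1..c_m)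
   with bucket c_l in F^{Ns l}, Ns l >= 1, sum Ns = N, such that for every
   multiset {{i_1..i_k}} of [n] (given as a k-tuple idx) there is a
   partition of [m] into k sets R_1..R_k (part l = the block containing l)
   and linear functionals f_l (given by coefficient vectors) such that each
   x_{i_j} is an F-linear combination (coefficients a) of f_l(c_l), l in R_j. *)
Definition is_BAC (F : fieldType) (n N k m : nat) (Ns : 'I_m -> nat)
    (C : 'rV[F]_n -> forall l : 'I_m, 'rV[F]_(Ns l)) : Prop :=
  (forall l, (0 < Ns l)%N) /\
  (\sum_(l < m) Ns l)%N = N /\
  (forall (a : F) (x y : 'rV[F]_n) (l : 'I_m),
      C (a *: x + y) l = a *: C x l + C y l) /\
  (forall idx : 'I_k -> 'I_n,
     exists part : 'I_m -> 'I_k,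
     exists f : forall l : 'I_m, 'rV[F]_(Ns l),
     exists a : 'I_k -> 'I_m -> F,
     forall (j : 'I_k) (x : 'rV[F]_n),
       x 0 (idx j) = \sum_(l < m | part l == j)
                        a j l * (\sum_(s < Ns l) f l 0 s * C x l 0 s)).

Definition ceil_div (a b : nat) : nat := ((a + b.-1) %/ b)%N.

(* Every [x_a] has [2t+1] pairwise disjoint recovery sets of buckets: [{a}]
   and, for each [j] in [[t]], the bucket storing [y_j = x_a + x_(a+j)] (resp.
   [x_(a-j) + x_a]) together with the bucket storing the other summand; the
   goodness of [v] makes all these buckets distinct.  If [a] is requested
   [r_a] times, recovery sets are chosen greedily, always for the most
   requested element: its [r_a - 1] earlier sets and the at most
   [2 (k - r_a) - (D - 1)] buckets used by the other [D - 1] requested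
   elements exclude at most [2k - D - max r] of its sets.  Since
   [ceil(k/D) <= max r], the hypothesis makes this less than [2t + 1]. *)

From HB Require Import structures.
From mathcomp Require Import all_boot all_order all_algebra all_field.
From mathcomp Require Import zify.
Set Implicit Arguments. Unset Strict Implicit. Unset Printing Implicit Defensive.
Import GRing.Theory.

Lemma leq_card_bigcup (I T : finType) (P : pred I) (F : I -> {set T}) :
  #|\bigcup_(i | P i) F i| <= \sum_(i | P i) #|F i|.
Proof.
apply: (big_ind2 (fun (A : {set T}) n => #|A| <= n)) => //; first by rewrite cards0.
move=> A1 n1 A2 n2 le1 le2; rewrite cardsU.
by apply: leq_trans (leq_subr _ _) _; apply: leq_add.
Qed.

Lemma card_meeting_leq (I T : finType) (F : I -> {set T}) (W : {set T}) :
  (forall i j, i != j -> [disjoint F i & F j]) ->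
  #|[set i | ~~ [disjoint F i & W]]| <= #|W|.
Proof.
move=> disF; have [->|[d _]] := set_0Vmem W.
  rewrite cards0 leqn0 cards_eq0; apply/eqP/setP => i.
  by rewrite !inE -setI_eq0 setI0 eqxx.
pose g i := odflt d [pick x in F i :&: W].
have gP i : i \in [set i | ~~ [disjoint F i & W]] -> g i \in F i :&: W.
  rewrite inE -setI_eq0 /g; case: pickP => [//|none /set0Pn[x]].
  by rewrite none.
rewrite -(@card_in_imset _ _ g); last first.
  move=> i j /gP gi /gP gj gij; apply/eqP/negPn/negP => /disF /disjointFr.
  move: gi gj; rewrite gij !inE => /andP[gi _] /andP[gj _].
  by move=> /(_ _ gi); rewrite gj.
apply/subset_leq_card/subsetP => _ /imsetP[i /gP + ->].
by rewrite inE => /andP[].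
Qed.

Definition multiplicity k N (idx : 'I_k -> 'I_N) (a : 'I_N) := #|[set j | idx j == a]|.

Lemma sum_multiplicity k N (idx : 'I_k -> 'I_N) : \sum_a multiplicity idx a = k.
Proof.
rewrite -[RHS]card_ord -sum1_card (partition_big idx xpredT) //=.
by apply: eq_bigr => a _; rewrite sum1dep_card.
Qed.

Section DisjointSelection.

Variables (N T : nat) (S : 'I_N -> 'I_T -> {set 'I_N}) (s0 : 'I_T).
Hypothesis S_s0 : forall a, S a s0 = [set a].
Hypothesis card_S_le2 : forall a s, #|S a s| <= 2.
Hypothesis S_disjoint : forall a s s', s != s' -> [disjoint S a s & S a s'].

(* Keeping the trivial set [s0] in every nonempty [Sel a] bounds the buckets
   used for [a] by [2 cnt a - 1]. *)
Definition disjoint_selection (cnt : 'I_N -> nat) (Sel : 'I_N -> {set 'I_T}) :=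
  [/\ forall a, #|Sel a| = cnt a, forall a, 0 < cnt a -> s0 \in Sel a &
      forall a b s s', s \in Sel a -> s' \in Sel b -> (a != b) || (s != s') ->
        [disjoint S a s & S b s']].

Lemma disjoint_selection_le1 cnt :
  (forall a, cnt a <= 1) -> exists Sel, disjoint_selection cnt Sel.
Proof.
move=> cnt_le1; exists (fun a => if 0 < cnt a then [set s0] else set0); split.
- by move=> a; case: posnP => [->|]; rewrite ?cards0 ?cards1 //; have := cnt_le1 a; lia.
- by move=> a ->; rewrite set11.
- move=> a b s s'; case: ifP => _; rewrite ?inE // => /eqP->.
  case: ifP => _; rewrite ?inE // => /eqP->; rewrite eqxx orbF => neq_ab.
  by rewrite !S_s0 disjoints1 inE.
Qed.

Lemma card_used_leq cnt Sel (P : pred 'I_N) : disjoint_selection cnt Sel ->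
  #|\bigcup_(b | P b) \bigcup_(s in Sel b) S b s| + \sum_(b | P b) (0 < cnt b)
    <= 2 * \sum_(b | P b) cnt b.
Proof.
move=> [cardSel s0Sel _].
apply: leq_trans (leq_add (leq_card_bigcup _ _) (leqnn _)) _.
rewrite -big_split big_distrr /=; apply: leq_sum => b _.
apply: leq_trans (leq_add (leq_card_bigcup _ _) (leqnn _)) _.
rewrite -cardSel; have [/cards0_eq->|pos] := posnP #|Sel b|; first by rewrite big_set0.
have s0_in : s0 \in Sel b by apply: s0Sel; rewrite -cardSel.
rewrite (big_setD1 _ s0_in) /= S_s0 cards1 (cardsD1 s0 (Sel b)) s0_in.
have le_rest : \sum_(s in Sel b :\ s0) #|S b s| <= #|Sel b :\ s0| * 2.
  by rewrite -sum_nat_const; apply: leq_sum => s _; apply: card_S_le2.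
apply: leq_trans (leq_add (leq_add (leqnn 1) le_rest) (leqnn 1)) _.
by set X := #|_ :\ s0|; lia.
Qed.

Lemma disjoint_selection_add cnt cnt' Sel am s :
  disjoint_selection cnt Sel -> 0 < cnt am -> s \notin Sel am ->
  [disjoint S am s & \bigcup_(b | b != am) \bigcup_(s' in Sel b) S b s'] ->
  cnt' am = (cnt am).+1 -> (forall a, a != am -> cnt' a = cnt a) ->
  disjoint_selection cnt' (fun a => if a == am then s |: Sel am else Sel a).
Proof.
move=> [cardSel s0Sel disSel] cnt_am s_new s_free cnt'_am cnt'_other.
have SelP a x : x \in (if a == am then s |: Sel am else Sel a) ->
    (a == am) && (x == s) \/ x \in Sel a.
  case: eqP => [->|_]; last by right.
  by case/setU1P => [->|]; [left; rewrite !eqxx | right].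
have disj_s b y : y \in Sel b -> [disjoint S am s & S b y].
  have [-> yb|neq_b yb] := eqVneq b am.
    by apply: S_disjoint; apply: (contraNneq _ s_new) => ->.
  apply: (disjointWr _ s_free); apply: subset_trans (bigcup_sup b neq_b).
  exact: (bigcup_sup _ yb).
split.
- move=> a; case: eqP => [->|/eqP neq_a]; last by rewrite cardSel cnt'_other.
  by rewrite cardsU1 s_new cardSel cnt'_am.
- move=> a cnt'_a; case: eqP => [_|/eqP neq_a]; first by rewrite setU1r ?s0Sel.
  by apply: s0Sel; rewrite -cnt'_other.
- move=> a b x y /SelP[/andP[/eqP-> /eqP->]|xa] /SelP[/andP[/eqP-> /eqP->]|yb].
  + by rewrite !eqxx.
  + by move=> _; apply: disj_s.
  + by move=> _; rewrite disjoint_sym; apply: disj_s.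
  + exact: disSel.
Qed.

Lemma exists_free_index cnt Sel am : disjoint_selection cnt Sel ->
  #|Sel am| + 2 * \sum_(b | b != am) cnt b < T + \sum_(b | b != am) (0 < cnt b) ->
  exists2 s, s \notin Sel am &
    [disjoint S am s & \bigcup_(b | b != am) \bigcup_(s' in Sel b) S b s'].
Proof.
move=> SelP small; set Used := \bigcup_(b | b != am) _.
pose Meet := [set s | ~~ [disjoint S am s & Used]].
have card_excluded : #|Sel am :|: Meet| < T.
  have meet_le : #|Meet| <= #|Used| := card_meeting_leq Used (@S_disjoint am).
  have used_le := card_used_leq (fun b => b != am) SelP.
  have U_le : #|Sel am :|: Meet| <= #|Sel am| + #|Meet| by rewrite cardsU leq_subr.
  move: U_le meet_le used_le small; rewrite -/Used.
  move: #|_ :|: _| #|Meet| #|Used| (\sum_(b | b != am) (0 < cnt b : nat)).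
  by move: (\sum_(b | b != am) cnt b) => *; lia.
have [s] : exists s, s \in ~: (Sel am :|: Meet).
  by apply/set0Pn; rewrite -card_gt0 cardsCs card_ord subn_gt0 setCK.
by rewrite !inE negb_or negbK => /andP[s_new s_free]; exists s.
Qed.

(* Greedy choice: serve the most requested element last.  Its new recovery
   set must avoid its own sets and every bucket used by the others, and the
   bound leaves fewer than [T] sets excluded. *)
Lemma disjoint_selection_exists K cnt : \sum_a cnt a = K ->
  2 * K <= T.-1 + #|[set a | 0 < cnt a]| + \max_a cnt a ->
  exists Sel, disjoint_selection cnt Sel.
Proof.
elim: K cnt => [|K IH] cnt sum_cnt bound.
  apply: disjoint_selection_le1 => a.
  by move: sum_cnt; rewrite (bigD1 a) //=; lia.
have N_gt0 : 0 < #|'I_N|.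
  rewrite lt0n; apply/negP => /eqP/card0_eq empty.
  by move: sum_cnt; rewrite big_pred0.
have [am max_am] := eq_bigmax cnt N_gt0.
have le_am a : cnt a <= cnt am by rewrite -max_am; apply: leq_bigmax.
have [le1|gt1] := leqP (cnt am) 1.
  by apply: disjoint_selection_le1 => a; apply: leq_trans (le_am a) le1.
pose cnt' a := if a == am then (cnt am).-1 else cnt a.
have rest_eq : \sum_(b | b != am) cnt' b = \sum_(b | b != am) cnt b.
  by apply: eq_bigr => b /negbTE; rewrite /cnt' => ->.
have support_rest : \sum_(b | b != am) (0 < cnt' b : nat) = #|[set a | 0 < cnt a]|.-1.
  rewrite (cardsD1 am) inE (ltnW gt1) add1n -sum1_card [LHS]big_mkcond [RHS]big_mkcond.
  by apply: eq_bigr => b _; rewrite !inE /cnt'; case: eqP => //= _; case: (0 < cnt b).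
have sum_split : cnt am + \sum_(b | b != am) cnt b = K.+1.
  by rewrite -sum_cnt [RHS](bigD1 am).
have [Sel' Sel'P] : exists Sel', disjoint_selection cnt' Sel'.
  apply: IH; first by rewrite (bigD1 am) //= rest_eq /cnt' eqxx; lia.
  have support_eq : [set a | 0 < cnt' a] = [set a | 0 < cnt a].
    by apply/setP => a; rewrite !inE /cnt'; case: eqP => [->|]; lia.
  have max_cnt' : (cnt am).-1 <= \max_a cnt' a.
    by have := @leq_bigmax _ cnt' am; rewrite /cnt' eqxx.
  rewrite support_eq; move: bound max_cnt'; rewrite max_am.
  by move: (#|_|) (\max_a cnt' a) => m M; lia.
have [s s_new s_free] : exists2 s, s \notin Sel' am &
    [disjoint S am s & \bigcup_(b | b != am) \bigcup_(s' in Sel' b) S b s'].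
  have [card_Sel' _ _] := Sel'P.
  apply: exists_free_index Sel'P _.
  have support_gt0 : 0 < #|[set a | 0 < cnt a]|.
    by rewrite card_gt0; apply/set0Pn; exists am; rewrite inE; lia.
  move: sum_split bound support_gt0; rewrite card_Sel' rest_eq support_rest /cnt' eqxx max_am.
  have T_gt0 : 0 < T := leq_ltn_trans (leq0n _) (ltn_ord s0).
  by move: #|_| (\sum_(b | b != am) cnt b) => m R; lia.
exists (fun a => if a == am then s |: Sel' am else Sel' a).
apply: (disjoint_selection_add Sel'P _ s_new s_free).
- by rewrite /cnt' eqxx; lia.
- by rewrite /cnt' eqxx; lia.
- by move=> a /negbTE; rewrite /cnt' => ->.
Qed.

Lemma disjoint_selection_assign k (idx : 'I_k -> 'I_N) Sel :
  disjoint_selection (multiplicity idx) Sel ->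
  exists sel : 'I_k -> 'I_T, forall j j', j != j' ->
    [disjoint S (idx j) (sel j) & S (idx j') (sel j')].
Proof.
move=> [cardSel _ disSel].
pose rank j := index j (enum [set j' | idx j' == idx j]).
pose sel j := nth s0 (enum (Sel (idx j))) (rank j).
have rank_lt j : rank j < size (enum (Sel (idx j))).
  by rewrite -cardE cardSel /multiplicity cardE /rank index_mem mem_enum inE.
have rank_inj j j' : idx j = idx j' -> rank j = rank j' -> j = j'.
  move=> same; rewrite /rank /= same => /(congr1 (nth j (enum [set i | idx i == idx j']))).
  by rewrite !nth_index ?mem_enum ?inE ?same.
have sel_in j : sel j \in Sel (idx j) by rewrite -mem_enum mem_nth.
exists sel => j j' neq_j; apply: disSel (sel_in j) (sel_in j') _.
have [same|] //= := eqVneq (idx j) (idx j').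
have lt' := rank_lt j'; rewrite -same in lt'.
apply: contra neq_j; rewrite /sel -same nth_uniq ?enum_uniq //.
by move=> /eqP/(rank_inj _ _ same)->.
Qed.

Lemma exists_disjoint_choice k (idx : 'I_k -> 'I_N) :
  2 * k <= T.-1 + #|[set a | 0 < multiplicity idx a]| + \max_a multiplicity idx a ->
  exists sel : 'I_k -> 'I_T, forall j j', j != j' ->
    [disjoint S (idx j) (sel j) & S (idx j') (sel j')].
Proof.
move=> bound; have [Sel SelP] := disjoint_selection_exists (sum_multiplicity idx) bound.
exact: disjoint_selection_assign SelP.
Qed.

End DisjointSelection.

Lemma ceil_div_leq k m r : 0 < m -> k <= m * r -> ceil_div k m <= r.
Proof.
move=> m_gt0 le_k; rewrite /ceil_div -ltnS ltn_divLR // mulSn.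
by move: le_k; rewrite mulnC; move: (r * m) => rm; lia.
Qed.

Lemma multiplicity_bound t k N (idx : 'I_k -> 'I_N) : 0 < k ->
  (forall D, 1 <= D <= k -> 2 * k <= 2 * t + D + ceil_div k D) ->
  2 * k <= 2 * t + #|[set a | 0 < multiplicity idx a]| + \max_a multiplicity idx a.
Proof.
move=> k_gt0 hk.
set supp := [set a | 0 < multiplicity idx a]; set r := \max_a _.
have sum_supp : \sum_(a in supp) multiplicity idx a = k.
  rewrite -[RHS](sum_multiplicity idx) [RHS](bigID (mem supp)) /=.
  by rewrite [X in _ = _ + X]big1 ?addn0 // => a; rewrite inE -eqn0Ngt => /eqP.
have k_le : k <= #|supp| * r.
  by rewrite -sum_supp -sum_nat_const; apply: leq_sum => a _; apply: leq_bigmax.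
have supp_le : #|supp| <= k.
  by rewrite -sum_supp -sum1_card; apply: leq_sum => a; rewrite inE.
have supp_gt0 : 0 < #|supp|.
  rewrite card_gt0; apply/set0Pn; exists (idx (Ordinal k_gt0)).
  by rewrite inE card_gt0; apply/set0Pn; exists (Ordinal k_gt0); rewrite inE.
have := ceil_div_leq supp_gt0 k_le; have := hk #|supp|.
by move: (ceil_div _ _) (#|supp| * r) => c sr; lia.
Qed.

Section RecoverySets.

Variables (t : nat) (v : seq nat).
Hypothesis goodv : good_vector t v.
Local Notation n := (nC t v).

Lemma nC_gt0 : 0 < n.
Proof. by rewrite /nC; case: ifP. Qed.

Lemma nC_good : n = (2 * t + size v).+1.
Proof. by case: goodv => [[[E _]|[E _]] _]; rewrite /nC E; case: eqP; lia. Qed.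

Lemma jpos_spec j : 1 <= j <= t ->
  [/\ j < jpos v j, jpos v j <= size v, nth 0 v (jpos v j).-1 = j
    & nth 0 v (jpos v j - j).-1 = j].
Proof.
case: goodv => _ [count2 dist] j_in.
pose P := [seq p <- iota 0 (size v) | nth 0 v p == j].
have size_P : size P = 2.
  rewrite size_filter -(count2 j j_in) -{3}(mkseq_nth 0 v) /mkseq count_map.
  by apply: eq_count => p /=; rewrite eq_sym.
have sorted_P : sorted ltn P.
  by apply: sorted_filter; [apply: ltn_trans | apply: iota_ltn_sorted].
have mem_P p : (p \in P) = (p < size v) && (nth 0 v p == j).
  by rewrite mem_filter mem_iota andbC.
case: P size_P sorted_P mem_P => [|p1 [|p2 []]] // _ /= /andP[lt12 _] mem_P.
have /andP[p1_lt /eqP v_p1] : (p1 < size v) && (nth 0 v p1 == j).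
  by rewrite -mem_P !inE eqxx.
have /andP[p2_lt /eqP v_p2] : (p2 < size v) && (nth 0 v p2 == j).
  by rewrite -mem_P !inE eqxx orbT.
have d12 : p2 - p1 = j by apply: (dist j) => //; rewrite lt12 p2_lt.
have -> : jpos v j = p2.+1.
  apply/eqP; rewrite eqn_leq; apply/andP; split.
    apply/bigmax_leqP => i /eqP v_i.
    by have := mem_P i; rewrite v_i eqxx ltn_ord !inE => /orP[] /eqP ->; lia.
  rewrite /jpos; apply: (@leq_bigmax_cond _ (fun i : 'I_(size v) => nth 0 v i == j)
    (fun i : 'I_(size v) => i.+1) (Ordinal p2_lt)); exact/eqP.
by split=> //; [lia | rewrite (_ : (p2.+1 - j).-1 = p1) //; lia].
Qed.

Definition modC (m : nat) : 'I_n := Ordinal (ltn_pmod m nC_gt0).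

Lemma modCE m : modC m = m %% n :> nat.
Proof. by []. Qed.

(* For [s > 0] and [j = uphalf s], the bucket [a + helper_off s] stores
   [y_j = x_a + x_(a+j)] if [s] is odd and [y_j = x_(a-j) + x_a] if [s] is
   even; [a + partner_off s] holds the other summand. *)
Definition helper_off (s : nat) :=
  if s == 0 then 0 else if odd s then t + jpos v (uphalf s)
  else t + jpos v (uphalf s) - uphalf s.

Definition partner_off (s : nat) :=
  if s == 0 then 0 else if odd s then uphalf s else n - uphalf s.

Definition rset (a : 'I_n) (s : 'I_(2 * t).+1) : {set 'I_n} :=
  [set modC (a + helper_off s); modC (a + partner_off s)].

(* Why recovery sets are disjoint: helper and partner offsets lie in disjoint
   ranges, and [v] read at a helper offset determines [uphalf s]. *)
Lemma offsets_spec s : 1 <= s <= 2 * t ->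
  [/\ t + 1 <= helper_off s <= n - t - 1,
      (1 <= partner_off s <= t) || (n - t <= partner_off s < n)
    & nth 0 v (helper_off s - t - 1) = uphalf s].
Proof.
move=> s_in; have j_in : 1 <= uphalf s <= t by lia.
have [lt_j le_size v_jpos v_jpos_j] := jpos_spec j_in.
rewrite /helper_off /partner_off nC_good.
have -> : (s == 0) = false by lia.
case: ifP => _; split; try lia.
- by rewrite (_ : _ - t - 1 = (jpos v (uphalf s)).-1) //; lia.
- by rewrite (_ : _ - t - 1 = (jpos v (uphalf s) - uphalf s).-1) //; lia.
Qed.

Lemma helper_off_inj s s' : 1 <= s <= 2 * t -> 1 <= s' <= 2 * t ->
  helper_off s = helper_off s' -> s = s'.
Proof.
move=> s_in s'_in eq_off.
have [_ _ v_s] := offsets_spec s_in; have [_ _ v_s'] := offsets_spec s'_in.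
have eq_j : uphalf s = uphalf s' by rewrite -v_s -v_s' eq_off.
have j_in : 1 <= uphalf s <= t by lia.
have [lt_j _ _ _] := jpos_spec j_in.
move: eq_off; rewrite /helper_off -eq_j.
have -> : (s == 0) = false by lia.
have -> : (s' == 0) = false by lia.
by case: ifP => odd_s; case: ifP => odd_s'; lia.
Qed.

Lemma partner_off_inj s s' : 1 <= s <= 2 * t -> 1 <= s' <= 2 * t ->
  partner_off s = partner_off s' -> s = s'.
Proof.
move=> s_in s'_in; rewrite /partner_off nC_good.
have -> : (s == 0) = false by lia.
have -> : (s' == 0) = false by lia.
by case: ifP => odd_s; case: ifP => odd_s'; lia.
Qed.

Lemma offsets_lt s : s <= 2 * t -> helper_off s < n /\ partner_off s < n.
Proof.
move=> le_s; have n_gt0 := nC_gt0.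
have [->|s_gt0] := posnP s; first by rewrite /helper_off /partner_off.
by have [] := offsets_spec (_ : 1 <= s <= 2 * t); [lia | lia].
Qed.

Lemma offsets_neq s s' : s <= 2 * t -> s' <= 2 * t -> s != s' ->
  [/\ helper_off s != helper_off s', helper_off s != partner_off s',
      partner_off s != helper_off s' & partner_off s != partner_off s'].
Proof.
have [off0 poff0] : helper_off 0 = 0 /\ partner_off 0 = 0 by [].
move=> le_s le_s' neq_s.
have [s0|s_gt0] := posnP s.
  have s'_in : 1 <= s' <= 2 * t by move: neq_s; rewrite s0; lia.
  by have [] := offsets_spec s'_in; rewrite s0 off0 poff0; split; lia.
have [s'0|s'_gt0] := posnP s'.
  have s_in : 1 <= s <= 2 * t by lia.
  by have [] := offsets_spec s_in; rewrite s'0 off0 poff0; split; lia.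
have s_in : 1 <= s <= 2 * t by lia.
have s'_in : 1 <= s' <= 2 * t by lia.
have [hs ps _] := offsets_spec s_in; have [hs' ps' _] := offsets_spec s'_in.
have neq_h : helper_off s != helper_off s'.
  by apply: contra neq_s => /eqP/(helper_off_inj s_in s'_in)->.
have neq_p : partner_off s != partner_off s'.
  by apply: contra neq_s => /eqP/(partner_off_inj s_in s'_in)->.
by split => //; lia.
Qed.

Lemma modC_addn_inj (a : 'I_n) o1 o2 : o1 < n -> o2 < n ->
  modC (a + o1) = modC (a + o2) -> o1 = o2.
Proof.
move=> lt1 lt2 /(congr1 val) /= /eqP.
by rewrite eqn_modDl !modn_small // => /eqP.
Qed.

Lemma rset0 a : rset a ord0 = [set a].
Proof.
have modC_a : modC (a + 0) = a by apply: val_inj; rewrite /= addn0 modn_small.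
by apply/setP => x; rewrite /rset /helper_off /partner_off /= modC_a !inE orbb.
Qed.

Lemma card_rset_le2 a s : #|rset a s| <= 2.
Proof. by rewrite cards2; case: (_ != _). Qed.

Lemma rset_disjoint a (s s' : 'I_(2 * t).+1) : s != s' ->
  [disjoint rset a s & rset a s'].
Proof.
move=> neq_s; have le_s := ltn_ord s; have le_s' := ltn_ord s'.
have [hs ps] := offsets_lt le_s; have [hs' ps'] := offsets_lt le_s'.
have [nhh nhp nph npp] := offsets_neq le_s le_s' neq_s.
rewrite -setI_eq0; apply/eqP/setP => x; rewrite !inE.
apply/negP => /andP[/orP[]/eqP-> /orP[]]; move/eqP/modC_addn_inj => eq_off.
- by move/eqP: (eq_off hs hs'); rewrite (negbTE nhh).
- by move/eqP: (eq_off hs ps'); rewrite (negbTE nhp).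
- by move/eqP: (eq_off ps hs'); rewrite (negbTE nph).
- by move/eqP: (eq_off ps ps'); rewrite (negbTE npp).
Qed.

End RecoverySets.

Local Open Scope ring_scope.

Lemma batch_recovery (F : fieldType) n m k (Ns : 'I_m -> nat)
    (C : 'rV[F]_n -> forall l : 'I_m, 'rV[F]_(Ns l)) (idx : 'I_k -> 'I_n)
    (R : 'I_k -> {set 'I_m}) (g : 'I_k -> forall l : 'I_m, 'rV[F]_(Ns l)) :
  (0 < k)%N -> (forall j j', j != j' -> [disjoint R j & R j']) ->
  (forall j (x : 'rV[F]_n), x 0 (idx j) = \sum_(l in R j) \sum_(s < Ns l) g j l 0 s * C x l 0 s) ->
  exists part : 'I_m -> 'I_k, exists f : forall l : 'I_m, 'rV[F]_(Ns l),
  exists a : 'I_k -> 'I_m -> F, forall j (x : 'rV[F]_n),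
    x 0 (idx j) = \sum_(l < m | part l == j) a j l * (\sum_(s < Ns l) f l 0 s * C x l 0 s).
Proof.
move=> k_gt0 disR decR.
pose owner l := [pick j | l \in R j].
have ownerE j l : l \in R j -> owner l = Some j.
  move=> l_in; rewrite /owner; case: pickP => [j' l_in'|none]; last by rewrite none in l_in.
  congr Some; apply/eqP; apply: contraT => /disR /disjointFr /(_ l_in').
  by rewrite l_in.
exists (fun l => odflt (Ordinal k_gt0) (owner l)).
exists (fun l => if owner l is Some j then g j l else 0).
exists (fun j l => if l \in R j then 1 else 0).
move=> j x; rewrite decR big_mkcond [RHS]big_mkcond; apply: eq_bigr => l _.
case: (boolP (l \in R j)) => [l_in|_]; first by rewrite (ownerE j l l_in) /= eqxx mul1r.
by rewrite mul0r; case: ifP.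
Qed.

Section Decoding.

Variables (F : fieldType) (t : nat) (v : seq nat).
Hypothesis goodv : good_vector t v.
Local Notation n := (nC t v).
Local Notation modC := (modC t v).

Lemma xat_modC (x : 'rV[F]_n) (z : int) (m : nat) (o : 'I_n) :
  (n%:Z %| z - m%:Z)%Z -> val o = (m %% n)%N -> xat x z = x 0 o.
Proof.
move=> dvd_n val_o; rewrite /xat (_ : (z %% n)%Z = (m %% n)%N); last first.
  by rewrite -modz_nat; apply/eqP; rewrite eqz_mod_dvd.
by rewrite -val_o /= (nth_map o) ?size_enum_ord ?nth_ord_enum.
Qed.

Lemma yC_helper (x : 'rV[F]_n) (a : 'I_n) s : (1 <= s <= 2 * t)%N ->
  yC x (modC (a + helper_off t v s)) (uphalf s)
    = x 0 a + x 0 (modC (a + partner_off t v s)).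
Proof.
move=> s_in; have j_in : (1 <= uphalf s <= t)%N by lia.
have [lt_j _ _ _] := jpos_spec goodv j_in.
have j_lt_n : (uphalf s < n)%N by rewrite (nC_good goodv); lia.
rewrite /yC /helper_off /partner_off (_ : (s == 0)%N = false); last by lia.
set j := uphalf s in lt_j j_lt_n *; set jp := jpos v j in lt_j *.
have a_mod : val a = (a %% n)%N by rewrite modn_small.
case: ifP => _; rewrite modCE.
- have := divn_eq (a + (t + jp)) n; move: (_ %/ _)%N (_ %% _)%N => q r E.
  have dvd_a : (n%:Z %| r%:Z - t%:Z - jp%:Z - a%:Z)%Z.
    by apply/dvdzP; exists (- q%:Z); lia.
  have dvd_aj : (n%:Z %| r%:Z - t%:Z - jp%:Z + j%:Z - (a + j)%N%:Z)%Z.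
    by apply/dvdzP; exists (- q%:Z); lia.
  by rewrite (xat_modC x dvd_a a_mod) (@xat_modC x _ _ (modC (a + j)) dvd_aj).
- have := divn_eq (a + (t + jp - j)) n; move: (_ %/ _)%N (_ %% _)%N => q r E.
  have dvd_a : (n%:Z %| r%:Z - t%:Z - jp%:Z + j%:Z - a%:Z)%Z.
    by apply/dvdzP; exists (- q%:Z); lia.
  have dvd_aj : (n%:Z %| r%:Z - t%:Z - jp%:Z - (a + (n - j))%N%:Z)%Z.
    by apply/dvdzP; exists (- q%:Z - 1); lia.
  by rewrite (xat_modC x dvd_a a_mod) (@xat_modC x _ _ (modC (a + (n - j))) dvd_aj) // addrC.
Qed.

Lemma constructionC_linear c (x y : 'rV[F]_n) l :
  constructionC (c *: x + y) l = c *: constructionC x l + constructionC y l.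
Proof.
have xat_lin z : xat (c *: x + y) z = c * xat x z + xat y z.
  rewrite /xat; set i := `|_|%N; have [i_lt|i_ge] := ltnP i n.
    by rewrite !(nth_map (Ordinal i_lt)) -?enumT ?size_enum_ord // !mxE.
  by rewrite !nth_default ?size_map -?enumT ?size_enum_ord // mulr0 addr0.
apply/rowP => s; rewrite !mxE; case: eqP => _; first by rewrite ?mxE.
by rewrite /yC !xat_lin mulrDr addrACA.
Qed.

(* Coordinate [0] of a bucket holds [x] and coordinate [j] holds [y_j]: for
   [s = 0] read [x_a] directly, otherwise read [y_(uphalf s)] at the helper
   bucket and subtract [x] read at the partner bucket. *)
Definition decoder (a : 'I_n) (s : 'I_(2 * t).+1) (l : 'I_n) : 'rV[F]_t.+1 :=
  if s == ord0 then delta_mx 0 ord0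
  else if l == modC (a + helper_off t v s) then delta_mx 0 (inord (uphalf s))
  else - delta_mx 0 ord0.

Lemma sum_delta_mul p (c : 'I_p) (w : 'I_p -> F) :
  \sum_(i < p) (delta_mx 0 c : 'rV[F]_p) 0 i * w i = w c.
Proof.
rewrite (bigD1 c) //= big1 ?addr0; first by rewrite mxE !eqxx mul1r.
by move=> i /negbTE neq_i; rewrite mxE neq_i andbF mul0r.
Qed.

Lemma sum_opp_delta_mul p (c : 'I_p) (w : 'I_p -> F) :
  \sum_(i < p) (- delta_mx 0 c : 'rV[F]_p) 0 i * w i = - w c.
Proof.
by rewrite -sum_delta_mul -sumrN; apply: eq_bigr => i _; rewrite mxE mulNr.
Qed.

Lemma decoderP (x : 'rV[F]_n) a s :
  x 0 a = \sum_(l in rset a s) \sum_(i < t.+1) decoder a s l 0 i * constructionC x l 0 i.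
Proof.
have c0 l : constructionC x l 0 ord0 = x 0 l by rewrite mxE eqxx.
have [->|s_gt0] := eqVneq s ord0.
  by rewrite rset0 big_set1 /decoder eqxx sum_delta_mul c0.
have s_in : (1 <= s <= 2 * t)%N by move: s_gt0 (ltn_ord s); rewrite -val_eqE /=; lia.
have [hs ps] := offsets_lt goodv (ltn_ord s : (s <= 2 * t)%N).
have neq_hp : modC (a + helper_off t v s) != modC (a + partner_off t v s).
  apply/eqP => /(modC_addn_inj hs ps).
  by have [] := offsets_spec goodv s_in; lia.
rewrite big_setU1 ?inE // big_set1 /decoder (negbTE s_gt0) eqxx.
rewrite eq_sym (negbTE neq_hp) sum_delta_mul sum_opp_delta_mul c0 mxE.
have j_lt : (uphalf s < t.+1)%N by lia.
case: eqP => [/(congr1 val)|_]; first by rewrite /= inordK //; lia.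
by rewrite inordK // yC_helper //; apply/esym/addrK.
Qed.

End Decoding.

Local Close Scope ring_scope.

Theorem theorem4p7 (F : finFieldType) (t : nat) (v : seq nat) (k : nat) :
  (0 < t)%N -> good_vector t v -> (0 < k)%N ->
  (forall D : nat, (1 <= D <= k)%N ->
     (2 * k <= 2 * t + D + ceil_div k D)%N) ->
  @is_BAC F (nC t v) ((t + 1) * nC t v) k (nC t v)
         (fun _ => t.+1) (@constructionC F t v).
Proof.
move=> _ goodv k_gt0 hk; split=> //; split.
  by rewrite sum_nat_const card_ord mulnC addn1.
split=> [c x y l|idx]; first exact: constructionC_linear.
have [sel disj] := exists_disjoint_choice (@rset0 t v) (@card_rset_le2 t v)
  (rset_disjoint goodv) (multiplicity_bound idx k_gt0 hk).
apply: (batch_recovery (R := fun j => rset (idx j) (sel j)) k_gt0 disj).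
by move=> j x; apply: decoderP.
Qed.
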